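(* Let $m\ge1$ be an integer and $H>1$ real. Let $L_m=\{\boldsymbol\theta\in\mathbb R^m: 0\le\theta_1\le\cdots\le\theta_m\le\pi\}$ and define $f=(f_1,\ldots,f_{m+1}):(1,H]\times L_m\to\mathbb R^{m+1}$ by letting $f_j(y,\theta_1,\ldots,\theta_m)=a_j$, where \[ (t-y)(t-y^{-1})\prod_{k=1}^m(t-e^{i\theta_k})(t-e^{-i\theta_k})=t^{2m+2}+a_1t^{2m+1}+\cdots+a_{m+1}t^{m+1}+\cdots+a_1t+1 . \] Then the Jacobian $J_f=\left|\frac{\partial(f_1,\ldots,f_{m+1})}{\partial(y,\theta_1,\ldots,\theta_m)}\right|$ equals \[ J_f(y,\theta_1,\ldots,\theta_m)=2^{\frac{m(m+1)}{2}}\left(1-\frac{1}{y^2}\right)\prod_{l=1}^{m}\left(y+\frac1y-2\cos\theta_l\right)\prod_{l=1}^m\sin\theta_l\prod_{1\le i<j\le m}\left|\cos\theta_i-\cos\theta_j\right|. \] *)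

From HB Require Import structures.
From mathcomp Require Import all_boot all_order all_algebra.
From mathcomp Require Import all_classical all_reals all_analysis.
Set Implicit Arguments. Unset Strict Implicit. Unset Printing Implicit Defensive.
Import Order.TTheory GRing.Theory Num.Theory.
Import numFieldNormedType.Exports.
Local Open Scope ring_scope.

Definition ypt {R : realType} {m : nat} (v : 'rV[R]_m.+1) : R := v 0 ord0.
Definition thpt {R : realType} {m : nat} (v : 'rV[R]_m.+1) (k : 'I_m) : R :=
  v 0 (lift ord0 k).

(* The polynomial (t - y)(t - 1/y) prod_k (t - e^{i th_k})(t - e^{-i th_k}),
   where (t - e^{i th})(t - e^{-i th}) = t^2 - 2 cos(th) t + 1. *)
Definition Ppoly {R : realType} {m : nat} (v : 'rV[R]_m.+1) : {poly R} :=
  ('X - (ypt v)%:P) * ('X - ((ypt v)^-1)%:P) *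
  \prod_(k < m) ('X^2 - (2 * cos (thpt v k))%:P * 'X + 1).

(* f(v) = (a_1, ..., a_{m+1}); a_(j+1) is the coefficient of t^(2m+1-j). *)
Definition fmap {R : realType} {m : nat} (v : 'rV[R]_m.+1) : 'rV[R]_m.+1 :=
  \row_(j < m.+1) (Ppoly v)`_(2 * m + 1 - j).

Definition jacobian_mx {R : realType} {m : nat} (x : 'rV[R]_m.+1) : 'M[R]_m.+1 :=
  \matrix_(i < m.+1, j < m.+1)
     'D_(delta_mx 0 j) (fun v : 'rV[R]_m.+1 => fmap v 0 i) x.

(* Write [Ppoly] as the product of the quadratics [t^2 - r_l t + 1] with traces
   [r_0 = y + 1/y] and [r_k = 2 cos theta_k].  Moving one coordinate moves only its own
   trace, so the j-th column of the Jacobian matrix is [- r_j'] times the coefficient vector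
   of [Q_j = prod_(l <> j) (t^2 - r_l t + 1)].  Now [Q_j(t) = t^m q_j(t + 1/t)] with
   [q_j = prod_(l <> j) (t - r_l)], so the coefficient matrix of the [Q_j] is a unimodular
   matrix times that of the [q_j]; multiplying the latter by the Vandermonde matrix of the
   [r_l] gives [diag (q_j(r_j))], whence its determinant is the Vandermonde determinant up
   to sign.  The power of 2 collects the factors 2 in [r_k' = - 2 sin theta_k] and in
   [r_k - r_l = 2 (cos theta_k - cos theta_l)]. *)

From HB Require Import structures.
From mathcomp Require Import all_boot all_order all_algebra.
From mathcomp Require Import all_classical all_reals all_analysis.
From mathcomp Require Import perm ring lra zify.
Set Implicit Arguments. Unset Strict Implicit. Unset Printing Implicit Defensive.
Import Order.TTheory GRing.Theory Num.Theory.
Import numFieldNormedType.Exports.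
Local Open Scope ring_scope.

Section PairProducts.
Variables (T : Type) (idx : T) (op : Monoid.com_law idx).

Lemma big_ord_pairs_recl n (F : 'I_n.+1 -> 'I_n.+1 -> T) :
  \big[op/idx]_(i < n.+1) \big[op/idx]_(j < n.+1 | (i < j)%N) F i j =
  op (\big[op/idx]_(j < n) F ord0 (lift ord0 j))
     (\big[op/idx]_(i < n) \big[op/idx]_(j < n | (i < j)%N) F (lift ord0 i) (lift ord0 j)).
Proof.
rewrite big_ord_recl; congr (op _ _).
  by rewrite big_mkcond big_ord_recl /= Monoid.mul1m.
apply: eq_bigr => i _; rewrite big_mkcond big_ord_recl /= Monoid.mul1m [RHS]big_mkcond.
by apply: eq_bigr => j _; rewrite /bump !leq0n !add1n ltnS.
Qed.

End PairProducts.

Lemma prodr_const_pairs (R : comPzSemiRingType) n (c : R) :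
  \prod_(i < n) \prod_(j < n | (i < j)%N) c = c ^+ 'C(n, 2).
Proof.
elim: n => [|n IH]; first by rewrite big_ord0 bin0n.
rewrite (big_ord_pairs_recl _ (fun _ _ => c)) IH prodr_const card_ord.
by rewrite /= binS bin1 addnC exprD.
Qed.

Section PalindromicLift.
Variable R : comNzRingType.
Implicit Types (p q : {poly R}) (c : R).

(* For [size q <= n.+1], [palin n q] is [t^n q(t + 1/t)]. *)
Definition palin n q : {poly R} :=
  \sum_(d < n.+1) q`_d *: ('X^(n - d) * ('X^2 + 1) ^+ d).

Lemma palinB n p q : palin n (p - q) = palin n p - palin n q.
Proof. by rewrite /palin -sumrB; apply: eq_bigr => d _; rewrite coefB scalerBl. Qed.

Lemma palinZ n c q : palin n (c *: q) = c *: palin n q.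
Proof. by rewrite /palin scaler_sumr; apply: eq_bigr => d _; rewrite coefZ scalerA. Qed.

Lemma palinMX n q : (size q <= n.+1)%N -> palin n.+1 (q * 'X) = ('X^2 + 1) * palin n q.
Proof.
move=> sq; rewrite /palin big_ord_recl coefMX eqxx scale0r add0r mulr_sumr.
apply: eq_bigr => d _; rewrite coefMX /= /bump leq0n add1n add0n subSS exprS.
by rewrite -scalerAr mulrCA.
Qed.

Lemma palinS n q : (size q <= n.+1)%N -> palin n.+1 q = 'X * palin n q.
Proof.
move=> sq; rewrite /palin big_ord_recr /= nth_default // scale0r addr0 mulr_sumr.
apply: eq_bigr => d _ /=; rewrite subSn -1?ltnS //.
by rewrite exprS -scalerAr mulrA.
Qed.

Lemma palinMXsubC n q c : (size q <= n.+1)%N ->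
  palin n.+1 (q * ('X - c%:P)) = palin n q * ('X^2 - c%:P * 'X + 1).
Proof.
move=> sq; rewrite mulrBr [q * _%:P]mulrC [c%:P * q]mul_polyC.
rewrite palinB palinZ palinMX // palinS // -mul_polyC; ring.
Qed.

Lemma palin_prod_XsubC (I : Type) (s : seq I) (r : I -> R) :
  \prod_(l <- s) ('X^2 - (r l)%:P * 'X + 1) = palin (size s) (\prod_(l <- s) ('X - (r l)%:P)).
Proof.
elim: s => [|a s IH].
  by rewrite !big_nil /palin big_ord1 coef1 scale1r !expr0 mulr1.
by rewrite !big_cons IH [(_ - _) * _]mulrC palinMXsubC ?size_prod_XsubC // mulrC.
Qed.

End PalindromicLift.

Definition roots_but (R : nzRingType) n (r : 'I_n.+1 -> R) (j : 'I_n.+1) : {poly R} :=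
  \prod_(l < n.+1 | l != j) ('X - (r l)%:P).

Definition quads_but (R : nzRingType) n (r : 'I_n.+1 -> R) (j : 'I_n.+1) : {poly R} :=
  \prod_(l < n.+1 | l != j) ('X^2 - (r l)%:P * 'X + 1).

Lemma size_filter_ord_neq n (j : 'I_n.+1) : size [seq l <- index_enum 'I_n.+1 | l != j] = n.
Proof.
apply: (etrans _ (_ : #|predC1 j| = n)); last by rewrite cardC1 card_ord.
by rewrite cardE /enum_mem [index_enum _]unlock.
Qed.

Section RootsBut.
Variables (R : idomainType) (n : nat) (r : 'I_n.+1 -> R).

Local Notation V := (Vandermonde n.+1 (\row_k r k)).

Lemma size_roots_but j : size (roots_but r j) = n.+1.
Proof. by rewrite /roots_but -big_filter size_prod_XsubC (size_filter_ord_neq j). Qed.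

Lemma quads_butE j : quads_but r j = palin n (roots_but r j).
Proof.
by rewrite /quads_but /roots_but -big_filter palin_prod_XsubC (size_filter_ord_neq j) big_filter.
Qed.

Definition roots_but_mx : 'M[R]_n.+1 := \matrix_(d, j) (roots_but r j)`_d.

Lemma roots_but_mx_Vandermonde :
  roots_but_mx^T *m V = diag_mx (\row_j (roots_but r j).[r j]).
Proof.
apply/matrixP => j k; have -> : (roots_but_mx^T *m V) j k = (roots_but r j).[r k].
  rewrite mxE (@horner_coef_wide _ n.+1) ?size_roots_but //.
  by apply: eq_bigr => d _; rewrite !mxE.
rewrite !mxE; have [->|kj] := eqVneq j k; first by rewrite mulr1n.
by rewrite /roots_but horner_prod (bigD1 k) 1?eq_sym //= hornerXsubC subrr mul0r mulr0n.
Qed.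

Lemma prod_roots_but_horner :
  \prod_(j < n.+1) (roots_but r j).[r j] = (-1) ^+ 'C(n.+1, 2) * \det V ^+ 2.
Proof.
rewrite det_Vandermonde expr2 mulrA.
have -> : \prod_(j < n.+1) (roots_but r j).[r j] =
    \prod_(j < n.+1) ((\prod_(l < n.+1 | (j < l)%N) (r j - r l)) *
                      \prod_(l < n.+1 | (l < j)%N) (r j - r l)).
  apply: eq_bigr => j _; rewrite /roots_but horner_prod (bigID (fun l : 'I_n.+1 => (j < l)%N)) /=.
  by congr (_ * _); apply: eq_big => [l|l _]; rewrite ?hornerXsubC // neq_ltn; case: ltngtP.
rewrite big_split /=; congr (_ * _).
  rewrite -prodr_const_pairs -big_split; apply: eq_bigr => i _.
  by rewrite -big_split; apply: eq_bigr => j _; rewrite !mxE /= mulN1r opprB.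
rewrite (exchange_big_dep xpredT) //=.
by apply: eq_bigr => l _; apply: eq_bigr => j _; rewrite !mxE.
Qed.

Lemma det_roots_but_mx : \det roots_but_mx = (-1) ^+ 'C(n.+1, 2) * \det V.
Proof.
have [V0|V0] := eqVneq (\det V) 0.
  rewrite V0 mulr0; move: V0; rewrite det_Vandermonde => /eqP/prodf_eq0[i _ /prodf_eq0[j ij]].
  rewrite !mxE subr_eq0 => /eqP rji; have ij' : i != j by rewrite neq_ltn ij.
  rewrite -det_tr; apply: (determinant_alternate ij') => d; rewrite !mxE /roots_but.
  rewrite (bigD1 j) 1?eq_sym // [in RHS](bigD1 i) //= rji.
  by rewrite [in LHS](eq_bigl (fun l => (l != j) && (l != i))) // => l; rewrite andbC.
apply: (mulIf V0); rewrite -mulrA -expr2 -prod_roots_but_horner -det_tr -det_mulmx.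
by rewrite roots_but_mx_Vandermonde det_diag; apply: eq_bigr => j _; rewrite mxE.
Qed.

End RootsBut.

Section QuadsButCoefficients.
Variables (R : numDomainType) (n : nat).

Lemma size_X2add1_exp b : size (('X^2 + 1 : {poly R}) ^+ b) = (2 * b).+1.
Proof.
have X2monic : ('X^2 + 1 : {poly R}) \is monic by rewrite -polyC1 monicXnaddC.
have := size_exp ('X^2 + 1 : {poly R}) b; rewrite -polyC1 size_XnaddC //= mul2n => <-.
by rewrite polyC1 prednK // size_poly_gt0 monic_neq0 // monic_exp.
Qed.

Definition palin_mx : 'M[R]_n.+1 :=
  \matrix_(i, d) ('X^(n - d) * ('X^2 + 1) ^+ d)`_(2 * n - i).

Lemma det_palin_mx : `|\det palin_mx| = 1.
Proof.
(* Reversing the columns gives a lower triangular matrix with unit diagonal. *)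
pose s : {perm 'I_n.+1} := perm (@rev_ord_inj n.+1).
pose T : 'M[R]_n.+1 := \matrix_(i, d) palin_mx i (rev_ord d).
have -> : palin_mx = col_perm s T by apply/matrixP => i d; rewrite !mxE permE rev_ordK.
rewrite col_permE det_mulmx det_perm normrM normrX normrN1 expr1n mulr1.
rewrite det_trig; last first.
  apply/is_trig_mxP => i d id; rewrite !mxE coefXnM; case: ifP => // _.
  by rewrite nth_default // size_X2add1_exp /=; have := ltn_ord d; have := ltn_ord i; lia.
rewrite big1 ?normr1 // => i _; rewrite !mxE coefXnM ifF; last first.
  by apply/negbTE; rewrite -leqNgt; have := ltn_ord i; lia.
have -> : (2 * n - i - (n - (n - i)) = (2 * (n - i)).+1.-1)%N by have := ltn_ord i; lia.
by rewrite -size_X2add1_exp -lead_coefE lead_coef_exp -polyC1 lead_coefXnaddC // expr1n.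
Qed.

Variable r : 'I_n.+1 -> R.

Lemma quads_but_coef_mxE :
  \matrix_(i, j) (quads_but r j)`_(2 * n - i) = palin_mx *m roots_but_mx r.
Proof.
apply/matrixP => i j; rewrite !mxE quads_butE /palin coef_sum.
by apply: eq_bigr => d _; rewrite coefZ !mxE mulrC.
Qed.

Lemma det_quads_but_coef_mx :
  `|\det (\matrix_(i, j) (quads_but r j)`_(2 * n - i))| =
  \prod_(i < n.+1) \prod_(j < n.+1 | (i < j)%N) `|r j - r i|.
Proof.
rewrite quads_but_coef_mxE det_mulmx normrM det_palin_mx mul1r det_roots_but_mx.
rewrite normrM normrX normrN1 expr1n mul1r det_Vandermonde normr_prod.
by apply: eq_bigr => i _; rewrite normr_prod; apply: eq_bigr => j _; rewrite !mxE.
Qed.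

End QuadsButCoefficients.

Lemma derive_along {R : numFieldType} {V W : normedModType R} (f : V -> W) (a v : V) :
  'D_v f a = 'D_1 (fun h : R => f (h *: v + a)) 0.
Proof.
rewrite /derive; set line := fun h : R => f (h *: v + a).
suff -> : (fun h : R => h^-1 *: ((f \o shift a) (h *: v) - f a)) =
          (fun h : R => h^-1 *: ((line \o shift 0) (h *: 1) - line 0)) by [].
by apply/funext => h; rewrite /line /= scale0r !add0r addr0 [h *: 1]mulr1.
Qed.

Lemma is_derive_shiftr {R : realType} (g : R -> R) (c : R) :
  derivable g c 1 -> is_derive (0 : R) 1 (fun h => g (h + c)) ('D_1 g c).
Proof.
move=> dg; have Dg : is_derive (shift c 0) 1 g ('D_1 g c) by rewrite /shift add0r.
by have := is_derive1_comp Dg (is_derive_shift 0 1 c); rewrite mulr1.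
Qed.

Lemma two_le_add_inv (R : realFieldType) (y : R) : 0 < y -> 2 <= y + y^-1.
Proof.
move=> y_gt0; rewrite -subr_ge0.
have -> : y + y^-1 - 2 = (y - 1) ^+ 2 / y by field; rewrite lt0r_neq0.
by rewrite divr_ge0 ?sqr_ge0 ?ltW.
Qed.

Section QuadProd.
Variables (R : realType) (n : nat) (g : 'I_n.+1 -> R -> R).

Definition quad_prod (v : 'rV[R]_n.+1) : {poly R} :=
  \prod_(l < n.+1) ('X^2 - (g l (v 0 l))%:P * 'X + 1).

Definition traces (v : 'rV[R]_n.+1) (l : 'I_n.+1) : R := g l (v 0 l).

Lemma quad_prod_along (x : 'rV[R]_n.+1) j (h : R) :
  quad_prod (h *: delta_mx 0 j + x) =
  ('X^2 - (g j (h + x 0 j))%:P * 'X + 1) * quads_but (traces x) j.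
Proof.
have coordE l : (h *: delta_mx 0 j + x) 0 l = (if l == j then h else 0) + x 0 l.
  by rewrite !mxE eqxx eq_sym; case: (j == l); rewrite ?mulr1 ?mulr0.
rewrite /quad_prod (bigD1 j) //= coordE eqxx; congr (_ * _).
by apply: eq_bigr => l lj; rewrite coordE (negbTE lj) add0r.
Qed.

Lemma derive_coef_quad_prod (x : 'rV[R]_n.+1) j k : derivable (g j) (x 0 j) 1 ->
  'D_(delta_mx 0 j) (fun v => (quad_prod v)`_k.+1) x =
  - 'D_1 (g j) (x 0 j) * (quads_but (traces x) j)`_k.
Proof.
move=> dg; set Q := quads_but _ j; rewrite derive_along.
have -> : (fun h => (quad_prod (h *: delta_mx 0 j + x))`_k.+1) =
          (fun h => ('X^2 * Q)`_k.+1 - g j (h + x 0 j) * Q`_k + Q`_k.+1).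
  apply/funext => h; rewrite quad_prod_along mulrDl mulrBl mul1r !coefD coefN.
  by rewrite -[(_%:P * 'X) * _]mulrA coefCM coefXM.
have [_ ->] := is_deriveD
  (is_deriveB (is_derive_cst (('X^2 * Q)`_k.+1) (0 : R) (1 : R))
     (is_deriveM (is_derive_shiftr dg) (is_derive_cst Q`_k (0 : R) (1 : R))))
  (is_derive_cst Q`_k.+1 (0 : R) (1 : R)).
by rewrite scaler0 add0r addr0 add0r mulNr mulrC.
Qed.

Lemma jacobian_coef_quad_prod (x : 'rV[R]_n.+1) :
  (forall j, derivable (g j) (x 0 j) 1) ->
  \matrix_(i < n.+1, j < n.+1) 'D_(delta_mx 0 j) (fun v => (quad_prod v)`_(2 * n + 1 - i)) x =
  \matrix_(i, j) (quads_but (traces x) j)`_(2 * n - i) *m diag_mx (\row_j - 'D_1 (g j) (x 0 j)).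
Proof.
move=> dg; rewrite mul_mx_diag; apply/matrixP => i j; rewrite !mxE.
have -> : (2 * n + 1 - i = (2 * n - i).+1)%N by have := ltn_ord i; lia.
by rewrite derive_coef_quad_prod // mulrC.
Qed.

End QuadProd.

Section Jacobian.
Variables (R : realType) (m : nat).
Implicit Types (x v : 'rV[R]_m.+1).

Definition trace_fun (j : 'I_m.+1) : R -> R :=
  if unlift ord0 j is Some _ then fun t => 2 * cos t else fun t => t + t^-1.

Lemma Ppoly_quad_prod v : ypt v != 0 -> Ppoly v = quad_prod trace_fun v.
Proof.
move=> y0; rewrite /Ppoly /quad_prod big_ord_recl /trace_fun unlift_none; congr (_ * _).
  by rewrite -polyC1 -(mulfV y0) polyCM polyCD; ring.
by apply: eq_bigr => k _; rewrite liftK.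
Qed.

Lemma near_Ppoly_quad_prod x : ypt x != 0 -> \forall v \near x, Ppoly v = quad_prod trace_fun v.
Proof.
move=> y0; have : \forall v \near x, ypt v != 0.
  apply: (@coord_continuous R 1 m.+1 0 0 x [set s | s != 0]%classic).
  by apply: open_nbhs_nbhs; split; first exact: open_neq.
by apply: filterS => v; apply: Ppoly_quad_prod.
Qed.

Lemma is_derive_trace_fun0 (y : R) : y != 0 -> is_derive y 1 (trace_fun ord0) (1 - (y ^+ 2)^-1).
Proof.
move=> y0; rewrite /trace_fun unlift_none.
apply: is_derive_eq; first exact: (is_deriveD _ (is_deriveV y0 (is_derive_id y 1))).
by rewrite /= [_%:A]mulr1.
Qed.

Lemma is_derive_trace_funS k (t : R) : is_derive t 1 (trace_fun (lift ord0 k)) (- (2 * sin t)).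
Proof.
by rewrite /trace_fun liftK; apply: is_derive_eq; rewrite scalerN.
Qed.

Lemma jacobian_mxE x : ypt x != 0 ->
  jacobian_mx x = \matrix_(i, j) (quads_but (traces trace_fun x) j)`_(2 * m - i)
                  *m diag_mx (\row_j - 'D_1 (trace_fun j) (x 0 j)).
Proof.
move=> y0; rewrite -jacobian_coef_quad_prod; last first.
  move=> j; case: (unliftP ord0 j) => [k|] ->.
    by case: (is_derive_trace_funS k (x 0 (lift ord0 k))).
  by case: (is_derive_trace_fun0 y0).
apply/matrixP => i j; rewrite !mxE; apply: near_eq_derive.
by near=> v; rewrite mxE (near (near_Ppoly_quad_prod y0) v).
Unshelve. all: by end_near.
Qed.

Lemma prod_trace_gaps x : 0 < ypt x ->
  \prod_(j < m) `|traces trace_fun x (lift ord0 j) - traces trace_fun x ord0| =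
  \prod_(l < m) (ypt x + (ypt x)^-1 - 2 * cos (thpt x l)).
Proof.
move=> y_gt0; apply: eq_bigr => l _; rewrite /traces /trace_fun liftK unlift_none distrC.
rewrite ger0_norm -/(ypt x) -/(thpt x l) //.
by have := cos_le1 (thpt x l); have := two_le_add_inv y_gt0; lra.
Qed.

Lemma prod_trace_diffs x :
  \prod_(i < m) \prod_(j < m | (i < j)%N)
     `|traces trace_fun x (lift ord0 j) - traces trace_fun x (lift ord0 i)| =
  2 ^+ 'C(m, 2) * \prod_(i < m) \prod_(j < m | (i < j)%N) `|cos (thpt x i) - cos (thpt x j)|.
Proof.
rewrite -prodr_const_pairs -big_split; apply: eq_bigr => i _; rewrite -big_split.
apply: eq_bigr => j _; rewrite /traces /trace_fun !liftK -mulrBr normrM distrC.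
by rewrite ger0_norm.
Qed.

Lemma prod_trace_slopes x : 1 < ypt x -> (forall k, 0 <= thpt x k <= pi) ->
  \prod_(j < m.+1) `|(\row_j - 'D_1 (trace_fun j) (x 0 j)) 0 j| =
  (1 - (ypt x ^+ 2)^-1) * (2 ^+ m * \prod_(l < m) sin (thpt x l)).
Proof.
move=> y_gt1 th_range; have y_gt0 : 0 < ypt x := lt_trans ltr01 y_gt1.
rewrite big_ord_recl !mxE; have [_ ->] := is_derive_trace_fun0 (lt0r_neq0 y_gt0).
rewrite normrN ger0_norm; last by rewrite subr_ge0 invf_le1 ?exprn_gt0 ?exprn_ege1 ?ltW.
rewrite -[in 2 ^+ m](card_ord m) -prodr_const -big_split; congr (_ * _); apply: eq_bigr => k _.
rewrite !mxE; have [_ ->] := is_derive_trace_funS k (x 0 (lift ord0 k)).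
by rewrite /= opprK ger0_norm // mulr_ge0 // (sin_ge0_pi (th_range k)).
Qed.

End Jacobian.

Unset Implicit Arguments.

Theorem lemma2 (R : realType) (m : nat) (H : R) (x : 'rV[R]_m.+1) :
  (1 <= m)%N -> 1 < H ->
  1 < ypt x <= H ->
  (forall k : 'I_m, 0 <= thpt x k <= pi) ->
  (forall i j : 'I_m, (i <= j)%N -> thpt x i <= thpt x j) ->
  `|\det (jacobian_mx x)| =
    2 ^+ ((m * m.+1)./2) * (1 - (ypt x ^+ 2)^-1) *
    (\prod_(l < m) (ypt x + (ypt x)^-1 - 2 * cos (thpt x l))) *
    (\prod_(l < m) sin (thpt x l)) *
    (\prod_(i < m) \prod_(j < m | (i < j)%N) `|cos (thpt x i) - cos (thpt x j)|).
Proof.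
move=> _ _ /andP[y_gt1 _] th_range _; have y_gt0 : 0 < ypt x := lt_trans ltr01 y_gt1.
rewrite jacobian_mxE ?lt0r_neq0 // det_mulmx normrM det_quads_but_coef_mx det_diag normr_prod.
rewrite big_ord_pairs_recl prod_trace_gaps // prod_trace_diffs prod_trace_slopes //.
have -> : (m * m.+1)./2 = (m + 'C(m, 2))%N by rewrite mulnC -bin2 binS bin1 addnC.
by rewrite exprD /=; ring.
Qed.
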